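(* Let $k\in\mathbb{Z}_{\geq2}$ and $j\in\mathbb{Z}_{\geq0}$. Then, as $n\to\infty$ (with implied constants depending on $k$ and $j$), \[ {}_k\omega_n(j)=\frac{e^{-1/n}}{j!\,n^j}+O\!\left(\frac{2^{r_k(n)-j}}{(r_k(n)-j)!}\right), \] and in particular \[ {}_k\omega_n(j)=\frac{1}{j!\,n^j}\left(1-\frac1n\right)+O\!\left(\frac{1}{n^{j+2}}\right). \]
   Context: For $k\in\mathbb{Z}_{\ge2}$, $n\in\mathbb{Z}_{\ge1}$, $r_k(n)=\frac1n\sum_{d\mid n}k^d\mu(n/d)$ ($\mu$ the Möbius function); $n\,r_k(n)$ is the degree of the $n$th dynatomic polynomial of $x^k+c$. $C_n\wr S_r=C_n^r\rtimes S_r$ acts on $B(n,r)=C_n\times\{1,\dots,r\}$ by $((\zeta_1,\dots,\zeta_r),\pi)\cdot(\zeta,i)=(\zeta_i\zeta,\pi(i))$; $\mathrm{Fix}(\sigma)$ is the fixed-point set of $\sigma$ in $B(n,r)$, and $\omega_{n,r}(j)=|\{\sigma\in C_n\wr S_r: |\mathrm{Fix}(\sigma)|=jn\}|/(r!\,n^r)$. Finally ${}_k\omega_n:=\omega_{n,r_k(n)}$. *)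

From Stdlib Require Import Reals.
From mathcomp Require Import all_boot all_order all_algebra all_fingroup.
Set Implicit Arguments. Unset Strict Implicit. Unset Printing Implicit Defensive.

Definition mu (m : nat) : int :=
  if all (fun p => logn p m <= 1) (primes m)
  then ((-1) ^+ size (primes m))%R else 0%R.

(* r_k(n) = (1/n) sum_{d | n} k^d mu(n/d)  (an integer; taken as nat) *)
Definition rsum (k n : nat) : int :=
  (\sum_(d <- divisors n) (k ^ d)%:Z * mu (n %/ d))%R.
Definition r_ (k n : nat) : nat := `|(rsum k n %/ n)%Z|%N.

(* Wreath product C_n wr S_r = C_n^r x| S_r, elements (zeta, pi);
   C_n is modelled additively as Z/nZ (values in 'I_n). *)
Definition wreath (n r : nat) : finType := ({ffun 'I_r -> 'I_n} * {perm 'I_r})%type.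

(* sigma . (z, i) = (zeta_i + z mod n, pi i); Fix(sigma) as a set of B(n,r)=C_n x {1..r} *)
Definition Fix (n r : nat) (s : wreath n r) : {set 'I_n * 'I_r} :=
  [set b : 'I_n * 'I_r |
     ((val (s.1 b.2) + val b.1) %% n == val b.1) && (s.2 b.2 == b.2)].

Definition count_fix (n r j : nat) : nat :=
  #|[set s : wreath n r | #|Fix s| == j * n]|.

Definition omega (n r j : nat) : R :=
  Rdiv (INR (count_fix n r j)) (Rmult (INR (r`!)) (pow (INR n) r)).

Definition komega (k n j : nat) : R := omega n (r_ k n) j.

From Stdlib Require Import Reals Factorial Lra Lia.
From mathcomp Require Import all_boot all_order all_algebra all_fingroup.
From mathcomp Require Import zify.
Set Implicit Arguments. Unset Strict Implicit. Unset Printing Implicit Defensive.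
Import GRing.Theory Num.Theory Order.TTheory.

(* An element (zeta, pi) of C_n wr S_r fixes (z, i) iff pi i = i and zeta_i = 0, for every z;
   so |Fix| = n * |S| with S the set of such coordinates i. Inclusion-exclusion over the
   subsets A of S, together with #{sigma | A ⊆ S} = n^(r-|A|) (r-|A|)!, gives
     omega_{n,r}(j) = 1/(j! n^j) * sum_(l <= r-j) (-1)^l n^-l / l!,
   a partial sum of the alternating series of e^(-1/n). The alternating series remainder
   bound then yields both estimates; the second one also needs r_k(n) > j for large n,
   which follows from n r_k(n) >= k^n - 2 k^(n/2). *)

Section AlternatingSeries.
Local Open Scope R_scope.
Variables (u : nat -> R) (l : R).
Hypotheses (u_decr : Un_decreasing u) (u_cv0 : Un_cv u 0)
  (u_alt_cv : Un_cv (fun N => sum_f_R0 (tg_alt u) N) l).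

Lemma alternated_series_tail m : Rabs (l - sum_f_R0 (tg_alt u) m) <= u (S m).
Proof.
case: (Nat.Even_or_Odd m) => [[N ->]|[N ->]].
- have [h1 h2] := alternated_series_ineq _ _ N u_decr u_cv0 u_alt_cv.
  rewrite tech5 in h1; unfold tg_alt at 2 in h1; rewrite pow_1_odd in h1.
  apply: Rabs_le; lra.
- have [_ h2] := alternated_series_ineq _ _ N.+1 u_decr u_cv0 u_alt_cv.
  have [h3 _] := alternated_series_ineq _ _ N u_decr u_cv0 u_alt_cv.
  rewrite multE in h2 h3; rewrite plusE addn1 multE.
  rewrite (_ : 2 * N.+1 = (2 * N).+2)%N in h2; last by rewrite mulnS add2n.
  have hsign : (-1) ^ (2 * N).+2 = 1 by have := pow_1_even N.+1; rewrite multE mulnS add2n.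
  rewrite tech5 in h2; unfold tg_alt at 2 in h2; rewrite hsign in h2.
  apply: Rabs_le; lra.
Qed.

Lemma alternated_partial_sums_dist p m : (p <= m)%nat ->
  Rabs (sum_f_R0 (tg_alt u) m - sum_f_R0 (tg_alt u) p) <= 2 * u (S p).
Proof.
move=> /ssrnat.leP hpm.
have hm := alternated_series_tail m; have hp := alternated_series_tail p.
have hu : u (S m) <= u (S p) by apply: decreasing_prop; [|lia].
replace (sum_f_R0 (tg_alt u) m - sum_f_R0 (tg_alt u) p)
  with (- (l - sum_f_R0 (tg_alt u) m) + (l - sum_f_R0 (tg_alt u) p)) by ring.
apply: Rle_trans (Rabs_triang _ _) _; rewrite Rabs_Ropp; lra.
Qed.
End AlternatingSeries.

Section ExpAlternatingSeries.
Local Open Scope R_scope.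

Definition exp_term (a : R) (l : nat) : R := a ^ l / INR (fact l).

Lemma exp_term_ge0 a l : 0 <= a -> 0 <= exp_term a l.
Proof.
move=> ha; apply: Rmult_le_pos; first exact: pow_le.
by apply/Rlt_le/Rinv_0_lt_compat/INR_fact_lt_0.
Qed.

Lemma exp_termS a l : exp_term a (S l) = exp_term a l * (a / INR (S l)).
Proof.
rewrite /exp_term fact_simpl mult_INR -tech_pow_Rmult; field.
by split; [apply: not_0_INR | apply: INR_fact_neq_0].
Qed.

Lemma exp_term_decreasing a : 0 <= a <= 1 -> Un_decreasing (exp_term a).
Proof.
move=> [a0 a1] l; rewrite exp_termS.
have hl : 1 <= INR (S l) by apply: (le_INR 1); lia.
have hi : 0 < / INR (S l) <= 1.
  by split; [apply: Rinv_0_lt_compat | rewrite -Rinv_1; apply: Rinv_le_contravar]; lra.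
have hai : a * / INR (S l) <= 1 by nra.
have := exp_term_ge0 l a0; rewrite /Rdiv; nra.
Qed.

Lemma exp_term_le_inv_fact a l : 0 <= a <= 1 -> exp_term a l <= / INR (fact l).
Proof.
move=> [a0 a1]; rewrite /exp_term /Rdiv -[X in _ <= X]Rmult_1_l.
apply: Rmult_le_compat_r; first by apply/Rlt_le/Rinv_0_lt_compat/INR_fact_lt_0.
by rewrite -(pow1 l); apply: pow_incr.
Qed.

Lemma alt_exp_cv a : Un_cv (fun N => sum_f_R0 (tg_alt (exp_term a)) N) (exp (- a)).
Proof.
apply: (Un_cv_ext (E1 (- a))); last exact: E1_cvg.
move=> N; apply: PartSum.sum_eq => i _.
rewrite /tg_alt /exp_term (_ : - a = -1 * a); last by ring.
by rewrite Rpow_mult_distr /Rdiv; ring.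
Qed.
End ExpAlternatingSeries.

Section ExpTailBounds.
Local Open Scope R_scope.
Variable a : R.
Hypothesis a_unit : 0 <= a <= 1.

Lemma alt_exp_tail m :
  Rabs (exp (- a) - sum_f_R0 (tg_alt (exp_term a)) m) <= exp_term a (S m).
Proof.
exact: alternated_series_tail (exp_term_decreasing a_unit) (cv_speed_pow_fact a) (alt_exp_cv a) m.
Qed.

Lemma alt_exp_sum_taylor1 m : (1 <= m)%N ->
  Rabs (sum_f_R0 (tg_alt (exp_term a)) m - (1 - a)) <= a ^ 2.
Proof.
move=> hm.
have -> : 1 - a = sum_f_R0 (tg_alt (exp_term a)) 1 by rewrite /= /tg_alt /exp_term /=; field.
have -> : a ^ 2 = 2 * exp_term a 2 by rewrite /exp_term /=; field.
apply: alternated_partial_sums_dist hm.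
- exact: exp_term_decreasing.
- exact: cv_speed_pow_fact.
- exact: alt_exp_cv.
Qed.
End ExpTailBounds.

(* Imported only here: these [ring]/[field] tactics shadow the Stdlib ones used above. *)
From mathcomp Require Import ring Rstruct.

Lemma eq_modDl_small n a b : (a < n)%N -> (b < n)%N ->
  ((a + b) %% n == b) = (a == 0)%N.
Proof.
move=> ha hb.
by rewrite -{2}(modn_small hb) -{2}(add0n b) eqn_modDr mod0n modn_small.
Qed.

Lemma bin_bin_fact s t j : (j <= t <= s)%N ->
  ('C(s, t) * 'C(t, j) * (j`! * (t - j)`! * (s - t)`!) = s`!)%N.
Proof.
by case/andP=> hjt hts; rewrite -(bin_fact hts) -(bin_fact hjt); ring.
Qed.

Lemma mul_bin_bin s t j : (j <= t)%N ->
  ('C(s, t) * 'C(t, j) = 'C(s, j) * 'C(s - j, t - j))%N.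
Proof.
move=> hjt; have [hts|hst] := leqP t s; last first.
  rewrite (bin_small hst) mul0n; have [hjs|hsj] := leqP j s; last by rewrite bin_small.
  by rewrite (@bin_small (s - j)) ?muln0 //; lia.
have hf : (0 < j`! * (t - j)`! * (s - t)`!)%N by rewrite !muln_gt0 !fact_gt0.
apply/eqP; rewrite -(eqn_pmul2r hf) (@bin_bin_fact s t j) ?hjt //; apply/eqP.
have hjs : (j <= s)%N by lia.
have htjs : (t - j <= s - j)%N by lia.
rewrite -(bin_fact hjs) -(bin_fact htjs) (_ : s - j - (t - j) = s - t)%N; last by lia.
ring.
Qed.

Lemma pffun_onC (T U : finType) (A : {set T}) y (f : {ffun T -> U}) :
  (f \in pffun_on y (~: A) [set: U]) = [forall i in A, f i == y].
Proof.
apply/pffun_onP/forall_inP => [[/supportP Hf _] i iA | Hf].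
  by apply/eqP/Hf; rewrite inE iA.
split=> [|u _]; last by rewrite inE.
by apply/supportP => i; rewrite inE negbK => /Hf/eqP.
Qed.

Lemma perm_onC (T : finType) (A : {set T}) (p : {perm T}) :
  (p \in perm_on (~: A)) = [forall i in A, p i == i].
Proof.
apply/subsetP/forall_inP => [Hp i iA | Hp i]; last by rewrite !inE; apply: contraNN => /Hp.
by apply: contraTT iA => /Hp; rewrite inE.
Qed.

Section SignedBinomialSums.
Local Open Scope ring_scope.
Variable F : comPzRingType.

Lemma sum_sign_bin m M : (m <= M)%N ->
  \sum_(u < M.+1) (-1) ^+ u * ('C(m, u)%:R : F) = (m == 0%N)%:R.
Proof.
move=> hmM; rewrite -(big_mkord xpredT (fun u => (-1) ^+ u * ('C(m, u)%:R : F))).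
rewrite (big_cat_nat _ (n := m.+1)) //= [X in _ + X]big1_seq ?addr0; last first.
  by move=> u /andP[_]; rewrite mem_index_iota => /andP[hu _]; rewrite bin_small ?mulr0.
have <- : (1 - 1 : F) ^+ m = (m == 0%N)%:R by rewrite subrr expr0n.
rewrite big_mkord exprBn; apply: eq_bigr => i _.
by rewrite !expr1n !mulr1 mulr_natr.
Qed.

Lemma big_subset_card (T : finType) (B : {set T}) (G : nat -> F) :
  \sum_(A : {set T} | A \subset B) G #|A| = \sum_(t < #|T|.+1) 'C(#|B|, t)%:R * G t.
Proof.
have cardA (A : {set T}) : (#|A| < #|T|.+1)%N by rewrite ltnS max_card.
rewrite (partition_big (fun A => Ordinal (cardA A)) xpredT) //=.
apply: eq_bigr => t _; rewrite (eq_bigr (fun _ => G t)); last by move=> A /andP[_ /eqP <-].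
rewrite -cards_draws (eq_bigl [in [set A : {set T} | A \subset B & #|A| == t]]).
  by rewrite sumr_const mulr_natl.
by move=> A; rewrite inE.
Qed.

Lemma card_eq_sum_sign (T : finType) (S : {set T}) j :
  ((#|S| == j)%:R : F) = \sum_(A : {set T} | A \subset S) (-1) ^+ (#|A| - j) * 'C(#|A|, j)%:R.
Proof.
have [hjS|hSj] := leqP j #|S|; last first.
  rewrite (ltn_eqF hSj) big1 // => A /subset_leq_card hA.
  by rewrite bin_small ?mulr0 // (leq_ltn_trans hA hSj).
rewrite (big_subset_card S (fun a => (-1) ^+ (a - j) * ('C(a, j)%:R : F))).
set s := #|S|; set N := #|T|.
have hjN : (j <= N)%N by rewrite (leq_trans hjS) ?max_card.
rewrite -(big_mkord xpredT (fun t => 'C(s, t)%:R * ((-1) ^+ (t - j) * ('C(t, j)%:R : F)))).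
rewrite (big_cat_nat _ (n := j)) //=; last by rewrite ltnW.
rewrite big1_seq ?add0r; last first.
  by move=> t /andP[_]; rewrite mem_index_iota => /andP[_ htj]; rewrite (bin_small htj) !mulr0.
rewrite -[X in \sum_(X <= _ < _) _]add0n big_addn subSn //.
under eq_bigr => u _ do rewrite addnK mulrCA -natrM mul_bin_bin ?leq_addl // addnK natrM mulrCA.
rewrite -mulr_sumr big_mkord sum_sign_bin; last by rewrite leq_sub2r // max_card.
have [->|hsj] := eqVneq s j; first by rewrite subnn binn mulr1.
by rewrite (_ : (s - j == 0)%N = false) ?mulr0 //; apply/eqP; lia.
Qed.
End SignedBinomialSums.

Section WreathFixedPoints.
Variables n' r : nat.
Local Notation n := n'.+1.

Definition fixed_coords (s : wreath n r) : {set 'I_r} :=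
  [set i | (s.1 i == ord0) && (s.2 i == i)].

Lemma card_Fix (s : wreath n r) : #|Fix s| = (#|fixed_coords s| * n)%N.
Proof.
have -> : Fix s = setX [set: 'I_n] (fixed_coords s).
  by apply/setP => -[z i]; rewrite !inE /= eq_modDl_small.
by rewrite cardsX cardsT card_ord mulnC.
Qed.

Lemma count_fixE j : count_fix n r j = #|[set s : wreath n r | #|fixed_coords s| == j]|.
Proof. by apply: eq_card => s; rewrite !inE card_Fix eqn_mul2r. Qed.

Lemma card_fixed_coords_sup (A : {set 'I_r}) :
  #|[set s : wreath n r | A \subset fixed_coords s]| = (n ^ (r - #|A|) * (r - #|A|)`!)%N.
Proof.
have -> : [set s : wreath n r | A \subset fixed_coords s] =
          setX [set f in pffun_on ord0 (~: A) [set: 'I_n]] [set p in perm_on (~: A)].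
  apply/setP => -[f p]; rewrite in_setX !in_set pffun_onC perm_onC.
  apply/subsetP/andP => [H | [/forall_inP Hf /forall_inP Hp] i iA].
    by split; apply/forall_inP => i /H; rewrite inE => /andP[].
  by rewrite inE Hf ?Hp.
have cardC : #|~: A| = (r - #|A|)%N by rewrite cardsCs setCK card_ord.
by rewrite cardsX !cardsE card_pffun_on card_perm cardsT card_ord cardC.
Qed.

Local Open Scope ring_scope.

Lemma count_fix_sum (F : comPzRingType) j : (count_fix n r j)%:R =
  \sum_(0 <= t < r.+1)
    'C(r, t)%:R * ((-1) ^+ (t - j) * 'C(t, j)%:R * (n ^ (r - t) * (r - t)`!)%:R) :> F.
Proof.
pose c t : F := (-1) ^+ (t - j) * 'C(t, j)%:R.
have -> : (count_fix n r j)%:R =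
    \sum_(s : wreath n r) \sum_(A : {set 'I_r} | A \subset fixed_coords s) c #|A|.
  rewrite count_fixE -sum1_card natr_sum big_mkcond /=.
  by apply: eq_bigr => s _; rewrite inE -card_eq_sum_sign; case: eqP.
rewrite (exchange_big_dep (fun A : {set 'I_r} => A \subset setT)) ?subsetT //=.
have cardE (A : {set 'I_r}) : #|fun s : wreath n r => A \subset fixed_coords s| =
    (n ^ (r - #|A|) * (r - #|A|)`!)%N.
  by rewrite -card_fixed_coords_sup; apply: eq_card => s; rewrite inE.
under eq_bigr => A _ do rewrite sumr_const cardE -mulr_natr.
rewrite (big_subset_card setT (fun t => c t * (n ^ (r - t) * (r - t)`!)%:R)).
by rewrite cardsT !card_ord big_mkord.
Qed.

Lemma count_fix_gt j : (r < j)%N -> count_fix n r j = 0%N.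
Proof.
move=> hrj; rewrite count_fixE; apply: eq_card0 => s; rewrite inE.
by rewrite ltn_eqF // (leq_ltn_trans _ hrj) // -[X in (_ <= X)%N]card_ord max_card.
Qed.

Lemma count_fix_ratio (F : numFieldType) j : (j <= r)%N ->
  (count_fix n r j)%:R / ((r`!)%:R * n%:R ^+ r) =
  ((j`!)%:R * n%:R ^+ j)^-1 * \sum_(l < (r - j).+1) (-1) ^+ l * (n%:R^-1 ^+ l / (l`!)%:R) :> F.
Proof.
move=> hjr; rewrite count_fix_sum mulr_suml.
rewrite (@big_cat_nat _ _ _ j) /=; [|by []|exact: leqW].
rewrite big1_seq ?add0r; last first.
  move=> t /andP[_]; rewrite mem_index_iota => /andP[_ htj].
  by rewrite (bin_small htj) !(mulr0, mul0r).
rewrite -[X in \sum_(X <= _ < _) _]add0n big_addn subSn // big_mkord mulr_sumr.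
apply: eq_bigr => -[l /= hl] _; rewrite addnK.
have hlj : (j <= l + j <= r)%N by apply/andP; split; lia.
have en : (n ^ (r - (l + j)) * n ^ l * n ^ j = n ^ r)%N.
  by rewrite -!expnD -addnA subnK //; case/andP: hlj.
rewrite -natrX -en -(bin_bin_fact hlj) addnK !natrM !natrX exprVn.
have nz (m : nat) : (0 < m)%N -> (m%:R : F) != 0 by rewrite pnatr_eq0 -lt0n.
case/andP: hlj => hjl hlr.
by field; rewrite !expf_neq0 ?nz ?fact_gt0 ?bin_gt0.
Qed.

End WreathFixedPoints.

Section OmegaBounds.
Local Open Scope R_scope.
Variables n r j : nat.
Hypothesis n_gt0 : (0 < n)%N.

Lemma omega_alt_sum : (j <= r)%N ->
  omega n r j = / (INR (fact j) * INR n ^ j) * sum_f_R0 (tg_alt (exp_term (/ INR n))) (r - j).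
Proof.
case: n n_gt0 => // n' _ hjr; rewrite /omega !RealsE (@count_fix_ratio n' r R j hjr).
by rewrite big_mkord; congr (_ * _); apply: eq_bigr => l _; rewrite /tg_alt /exp_term !RealsE.
Qed.

Lemma omega_gt : (r < j)%N -> omega n r j = 0.
Proof.
by case: n n_gt0 => // n' _ hrj; rewrite /omega count_fix_gt //= /Rdiv Rmult_0_l.
Qed.

Let a := / INR n.
Let D := INR (fact j) * INR n ^ j.

Lemma inv_INR_in01 : 0 <= a <= 1.
Proof.
have hn : 1 <= INR n by apply: (le_INR 1); lia.
by split; [apply/Rlt_le/Rinv_0_lt_compat | rewrite -Rinv_1; apply: Rinv_le_contravar]; lra.
Qed.

Lemma inv_fact_pow_bound : [/\ 0 < / D, / D <= / INR n ^ j & / INR n ^ j <= 1].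
Proof.
have hn : 1 <= INR n by apply: (le_INR 1); lia.
have hnj : 1 <= INR n ^ j by apply: pow_R1_Rle.
have hf : 1 <= INR (fact j) by apply: (le_INR 1); apply: lt_O_fact.
split; first by apply: Rinv_0_lt_compat; rewrite /D; nra.
  by apply: Rinv_le_contravar; rewrite /D; nra.
by rewrite -Rinv_1; apply: Rinv_le_contravar; lra.
Qed.

Lemma omega_exp_approx :
  Rabs (omega n r j - exp (- a) / D) <= 2 ^ (r - j) / INR (fact (r - j)).
Proof.
have [hD0 hDn hn1] := inv_fact_pow_bound.
have hD1 : / D <= 1 by lra.
have [ha0 ha1] := inv_INR_in01.
have [hjr|hrj] := leqP j r; last first.
  rewrite omega_gt // (_ : r - j = 0)%N /=; last by apply/eqP; rewrite subn_eq0 ltnW.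
  have ha : 0 < a by apply/Rinv_0_lt_compat/lt_0_INR; lia.
  have he : exp (- a) <= 1 by rewrite -exp_0; apply/Rlt_le/exp_increasing; lra.
  have he0 := exp_pos (- a).
  rewrite Rminus_0_l Rabs_Ropp Rabs_pos_eq /Rdiv ?Rinv_1 ?Rmult_1_r; last first.
    by apply: Rmult_le_pos; lra.
  by rewrite -[1]Rmult_1_r; apply: Rmult_le_compat; lra.
rewrite omega_alt_sum // -/D; set m := (r - j)%N.
have ht := alt_exp_tail inv_INR_in01 m; set sm := sum_f_R0 _ m in ht *.
have hdec : exp_term a (S m) <= exp_term a m := exp_term_decreasing inv_INR_in01 m.
have hinv := exp_term_le_inv_fact m inv_INR_in01.
have h2 : 1 <= 2 ^ m by apply: pow_R1_Rle; lra.
have hfact : 0 < / INR (fact m) by apply/Rinv_0_lt_compat/INR_fact_lt_0.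
replace (/ D * sm - exp (- a) / D) with (/ D * - (exp (- a) - sm)) by (rewrite /Rdiv; lra).
rewrite Rabs_mult Rabs_Ropp Rabs_pos_eq; last by lra.
have hX : Rabs (exp (- a) - sm) <= / INR (fact m) by lra.
have := Rabs_pos (exp (- a) - sm); rewrite /Rdiv; nra.
Qed.

Lemma omega_second_order : (j < r)%N ->
  Rabs (omega n r j - / D * (1 - a)) <= / INR n ^ (j + 2).
Proof.
move=> hjr; have [hD0 hDn _] := inv_fact_pow_bound.
have hm : (1 <= r - j)%N by rewrite subn_gt0.
rewrite (omega_alt_sum (ltnW hjr)) -/D -Rmult_minus_distr_l Rabs_mult.
rewrite (Rabs_pos_eq (/ D)); last by lra.
rewrite pow_add Rinv_mult -[/ INR n ^ 2]pow_inv -/a.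
apply: Rmult_le_compat; [lra | apply: Rabs_pos | lra |].
by have := alt_exp_sum_taylor1 inv_INR_in01 hm.
Qed.
End OmegaBounds.

Lemma mu_ge_N1 m : (-1 <= mu m)%R.
Proof.
rewrite /mu; case: ifP => _ //; rewrite -signr_odd.
by case: (odd _); rewrite ?expr1 ?expr0 // lerN10.
Qed.

Lemma rsum_ge k n : (0 < n)%N ->
  ((k ^ n)%:Z - (\sum_(d <- divisors n | d != n) k ^ d)%N%:Z <= rsum k n)%R.
Proof.
move=> hn; rewrite /rsum (bigD1_seq n) ?divisors_id ?divisors_uniq //= divnn hn.
rewrite (_ : mu 1 = 1) // mulr1 lerD2l -natz natr_sum -sumrN.
by apply: ler_sum => d _; rewrite natz -mulrN1 ler_wpM2l ?mu_ge_N1.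
Qed.

Lemma proper_dvdn_le_half d n : (0 < n)%N -> d %| n -> d != n -> (d <= n./2)%N.
Proof.
move=> hn /dvdnP[q hq] hdn; rewrite geq_half_double -mul2n hq leq_mul2r.
have q_gt1 : (1 < q)%N.
  by case: q hq => [|[|q]] hq //; move: hn hdn; rewrite hq ?mul0n ?mul1n ?eqxx.
by rewrite q_gt1 orbT.
Qed.

Lemma sum_proper_divisors_le k n : (0 < n)%N ->
  (\sum_(d <- divisors n | d != n) k ^ d <= \sum_(0 <= d < n./2.+1) k ^ d)%N.
Proof.
move=> hn; apply: (uniq_sub_le_big_cond leqnn (fun x y => leq_addr y x)).
- by rewrite filter_uniq ?divisors_uniq.
- by rewrite filter_uniq ?iota_uniq.
move=> d; rewrite !mem_filter mem_iota /= add0n ltnS => /andP[hdn hd].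
by rewrite proper_dvdn_le_half // dvdn_divisors.
Qed.

Lemma sum_pow_le_double k h : (2 <= k)%N -> (\sum_(0 <= d < h.+1) k ^ d <= 2 * k ^ h)%N.
Proof.
move=> hk; elim: h => [|h IH]; first by rewrite big_nat1.
rewrite big_nat_recr //= expnS.
have : (2 * k ^ h <= k * k ^ h)%N by rewrite leq_mul2r hk orbT.
lia.
Qed.

Lemma sq_le_pow2 h : (4 <= h)%N -> (h * h <= 2 ^ h)%N.
Proof.
elim: h => // h IH hh; have [->|h3] := eqVneq h 3 => //.
have h4 : (4 <= h)%N by move/eqP: h3; lia.
by have := IH h4; rewrite expnS; nia.
Qed.

Lemma pow_dominates k j n : (2 <= k)%N -> (4 * j + 12 <= n)%N ->
  (j.+1 * n + 2 * k ^ n./2 <= k ^ n)%N.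
Proof.
move=> hk hn; set h := n./2.
have hn2 : (h.*2 <= n <= h.*2.+1)%N.
  by have := odd_double_half n; rewrite -/h; case: odd => <-; rewrite ?leqnn ?leqnSn.
have hh : (2 * j + 6 <= h)%N by move: hn2; rewrite -!muln2; lia.
have hkn : (k ^ h * k ^ h <= k ^ n)%N by rewrite -expnD leq_pexp2l; lia.
have h2k : (2 ^ h <= k ^ h)%N by rewrite leq_exp2r; lia.
have h4 : (4 <= h)%N by lia.
have := sq_le_pow2 h4; move: hn2; rewrite -!muln2.
set X := (k ^ h)%N; set Y := (k ^ n)%N; nia.
Qed.

Lemma r_gt k j n : (2 <= k)%N -> (4 * j + 12 <= n)%N -> (j < r_ k n)%N.
Proof.
move=> hk hn; have n_gt0 : (0 < n)%N by lia.
have hsum := leq_trans (sum_proper_divisors_le k n_gt0) (sum_pow_le_double n./2 hk).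
have hrsum : ((j.+1 * n)%:Z <= rsum k n)%R.
  by apply: le_trans (rsum_ge k n_gt0); have := pow_dominates hk hn; lia.
rewrite /r_; case: (rsum k n) hrsum => z hz; last by lia.
by rewrite divz_nat absz_nat -(mulnK j.+1 n_gt0) leq_div2r //; lia.
Qed.

Open Scope R_scope.

Theorem mainTheorem5 (k j : nat) (hk : (2 <= k)%coq_nat) :
  (exists C : R, exists N : nat, forall n : nat, (N <= n)%coq_nat ->
     Rabs (komega k n j - exp (- / INR n) / (INR (fact j) * INR n ^ j))
       <= C * (2 ^ (r_ k n - j)%coq_nat / INR (fact (r_ k n - j)%coq_nat)))
  /\
  (exists C : R, exists N : nat, forall n : nat, (N <= n)%coq_nat ->
     Rabs (komega k n j - / (INR (fact j) * INR n ^ j) * (1 - / INR n))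
       <= C * / INR n ^ (j + 2)%coq_nat).
Proof.
move/ssrnat.leP: hk => hk; split.
- exists 1, 1%nat => n /ssrnat.leP hn; rewrite Rmult_1_l.
  exact: omega_exp_approx.
- exists 1, (4 * j + 12)%nat => n /ssrnat.leP hn; rewrite Rmult_1_l.
  by apply: omega_second_order; [lia | exact: r_gt].
Qed.
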